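(* Let $H=(V,E)$ be a hypergraph whose vertex set $V$ is a partition of $[n]$ into sets of cardinality at least $2$, and suppose $H$ is downward-closed (for every $e\in E$ and every $e'\subseteq e$ with $|e'|>1$, $e'\in E$). Let $D=\{\bar i_I\}_{I\in V}$ with $\bar i_I\in I$ for each $I\in V$. Then the coordinate projection $\operatorname{proj}_{\mathcal{J}^H_\le(D)}$, restricted to $\mathrm{MC}^H$, is a bijection from $\mathrm{MC}^H$ onto $\mathrm{MC}^H_\le(D)$.
   Context: Let $n$ be a positive integer, $[n]=\{1,\dots,n\}$. A hypergraph $H=(V,E)$ here has as vertex set $V$ a family of pairwise disjoint subsets of $[n]$, each of cardinality at least $2$, and hyperedge set $E$ consisting of subsets $e\subseteq V$ with $|e|\ge 2$. Write $L(V)=\{\{I\}: I\in V\}$. For a nonempty $e\subseteq V$, $\mathcal{J}^e$ denotes the family of sets $J\subseteq \bigcup_{I\in e} I$ with $|J\cap I|=1$ for every $I\in e$. Let $\mathcal{J}^H=\bigcup_{e\in L(V)\cup E}\mathcal{J}^e$. For a vector $w$ indexed by sets, write $w_i=w_{\{i\}}$ and $w(A)=\sum_{i\in A}w_i$. Let $\mathscr{S}^H=\{w\in\{0,1\}^{\mathcal{J}^H}: w(I)=1\ \forall I\in V;\ w_J=\prod_{i\in J}w_i\ \forall J\in\mathcal{J}^H, |J|>1\}$ and $\mathrm{MC}^H=\operatorname{conv}\mathscr{S}^H$. For $D$ as in the claim, $\mathcal{J}^H_\le(D)=\{J\in\mathcal{J}^H: J\subseteq[n]\setminus D\}$ and $\mathrm{MC}^H_\le(D)=\operatorname{conv}\{v\in\{0,1\}^{\mathcal{J}^H_\le(D)}: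 v(I\setminus D)\le 1\ \forall I\in V;\ v_J=\prod_{i\in J}v_i\ \forall J\in\mathcal{J}^H_\le(D), |J|>1\}$. *)

From HB Require Import structures.
From mathcomp Require Import all_boot all_order all_algebra.
From mathcomp Require Import reals.
Set Implicit Arguments. Unset Strict Implicit. Unset Printing Implicit Defensive.
Import Order.TTheory GRing.Theory Num.Theory.
Local Open Scope ring_scope.

(* [n] is modelled as 'I_n (elements 0..n-1).  Vectors indexed by a family
   of sets F ⊆ 2^[n] are modelled as functions {ffun {set 'I_n} -> R}
   (resp. -> bool) vanishing outside F; this is canonically R^F. *)

Definition Jfam (n : nat) (e : {set {set 'I_n}}) : {set {set 'I_n}} :=
  [set J : {set 'I_n} | (J \subset \bigcup_(I in e) I)
                        && [forall I in e, #|J :&: I| == 1%N]].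

Definition LV (n : nat) (V : {set {set 'I_n}}) : {set {set {set 'I_n}}} :=
  [set [set I] | I in V].

Definition JH (n : nat) (V : {set {set 'I_n}}) (E : {set {set {set 'I_n}}})
  : {set {set 'I_n}} :=
  \bigcup_(e in LV V :|: E) Jfam e.

Definition JHle (n : nat) (V : {set {set 'I_n}}) (E : {set {set {set 'I_n}}})
  (D : {set 'I_n}) : {set {set 'I_n}} :=
  [set J in JH V E | J \subset ~: D].

Definition SH (n : nat) (V : {set {set 'I_n}}) (E : {set {set {set 'I_n}}})
  (w : {ffun {set 'I_n} -> bool}) : Prop :=
  [/\ (forall J, J \notin JH V E -> w J = false),
      (forall I, I \in V -> (\sum_(i in I) (w [set i] : nat))%N = 1%N) &
      (forall J, J \in JH V E -> (1 < #|J|)%N -> w J = [forall i in J, w [set i]])].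

Definition SHle (n : nat) (V : {set {set 'I_n}}) (E : {set {set {set 'I_n}}})
  (D : {set 'I_n}) (v : {ffun {set 'I_n} -> bool}) : Prop :=
  [/\ (forall J, J \notin JHle V E D -> v J = false),
      (forall I, I \in V -> (\sum_(i in I :\: D) (v [set i] : nat) <= 1)%N) &
      (forall J, J \in JHle V E D -> (1 < #|J|)%N -> v J = [forall i in J, v [set i]])].

Definition conv01 (R : realType) (K : finType) (A : {ffun K -> bool} -> Prop)
  (x : {ffun K -> R}) : Prop :=
  exists lam : {ffun {ffun K -> bool} -> R},
    [/\ (forall v, 0 <= lam v),
        (forall v, ~ A v -> lam v = 0),
        \sum_v lam v = 1 &
        (forall k, x k = \sum_v lam v * ((v k : nat)%:R))].

Definition MC (R : realType) (n : nat) (V : {set {set 'I_n}})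
  (E : {set {set {set 'I_n}}}) : {ffun {set 'I_n} -> R} -> Prop :=
  conv01 (SH V E).

Definition MCle (R : realType) (n : nat) (V : {set {set 'I_n}})
  (E : {set {set {set 'I_n}}}) (D : {set 'I_n}) : {ffun {set 'I_n} -> R} -> Prop :=
  conv01 (SHle V E D).

Definition projle (R : realType) (n : nat) (V : {set {set 'I_n}})
  (E : {set {set {set 'I_n}}}) (D : {set 'I_n}) (x : {ffun {set 'I_n} -> R})
  : {ffun {set 'I_n} -> R} :=
  [ffun J => if J \in JHle V E D then x J else 0].

From HB Require Import structures.
From mathcomp Require Import all_boot all_order all_algebra.
From mathcomp Require Import reals.
From Stdlib Require Import Classical.
Import Order.TTheory GRing.Theory Num.Theory.
Local Open Scope ring_scope.
Set Implicit Arguments. Unset Strict Implicit. Unset Printing Implicit Defensive.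

(** Restricting a vertex [w] of [MC^H] to [J^H_<=(D)] gives a vertex of
    [MC^H_<=(D)], and conversely a vertex [v] of [MC^H_<=(D)] lifts to [MC^H] by setting
    [w_(ibar I) = 1 - v(I \ D)] and taking products; this gives the projection and its
    surjectivity.  For injectivity, on [S^H] every coordinate [w_J] is the product of the
    [w_i], i in [J]; substituting [w_d = 1 - sum_(j in I \ D) w_j] for each [d] in [J] that
    lies in [D] rewrites it as an affine combination of coordinates [w_K], [K] in
    [J^H_<=(D)] (downward closure of [E] keeps each [K] in [J^H]).  Affine relations
    valid on the vertices pass to convex combinations, so [x] is determined by its
    projection. *)

Section Mixtures.
Variables (R : realType) (K : finType).
Local Notation vec := {ffun K -> bool}.
Implicit Types (A B : vec -> Prop) (lam mu : {ffun vec -> R}) (g h : vec -> R).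

Definition mix lam g : R := \sum_v lam v * g v.

Definition rcoord (k : K) (v : vec) : R := (v k : nat)%:R.

Definition supported_on A lam := forall v, ~ A v -> lam v = 0.

Lemma eq_mix_on A lam g h :
  supported_on A lam -> (forall v, A v -> g v = h v) -> mix lam g = mix lam h.
Proof.
move=> lamA gh; apply: eq_bigr => v _.
by case: (classic (A v)) => [/gh -> | /lamA ->]; rewrite ?mul0r.
Qed.

Lemma mix_const lam c : mix lam (fun=> c) = c * \sum_v lam v.
Proof. by rewrite /mix mulr_sumr; apply: eq_bigr => v _; rewrite mulrC. Qed.

Lemma mixB lam g h : mix lam (fun v => g v - h v) = mix lam g - mix lam h.
Proof. by rewrite /mix -sumrB; apply: eq_bigr => v _; rewrite mulrBr. Qed.

Lemma mix_sum (I : finType) (S : {pred I}) lam (G : I -> vec -> R) :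
  mix lam (fun v => \sum_(j in S) G j v) = \sum_(j in S) mix lam (G j).
Proof. by rewrite /mix exchange_big; apply: eq_bigr => v _; rewrite mulr_sumr. Qed.

Lemma conv01_push A B (f : vec -> vec) lam :
  (forall v, 0 <= lam v) -> supported_on A lam -> \sum_v lam v = 1 ->
  (forall w, A w -> B (f w)) ->
  conv01 B [ffun k => mix lam (fun w => rcoord k (f w))].
Proof.
move=> lam_ge0 lamA lam1 AB.
exists [ffun u => \sum_(w | f w == u) lam w]; split.
- by move=> u; rewrite ffunE sumr_ge0.
- move=> u Bu; rewrite ffunE big1 // => w /eqP fw.
  by apply: lamA => Aw; apply: Bu; rewrite -fw; apply: AB.
- by rewrite -lam1 [RHS](partition_big f xpredT) //=; apply: eq_bigr => u _; rewrite ffunE.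
- move=> k; rewrite ffunE /mix (partition_big f xpredT) //=; apply: eq_bigr => u _.
  by rewrite ffunE big_distrl; apply: eq_bigr => w /eqP ->.
Qed.

(* [g] is recovered from the [C]-coordinates of any affine mixture of points of [A]. *)
Definition determined A (C : {set K}) g :=
  forall lam mu, supported_on A lam -> supported_on A mu ->
  \sum_v lam v = 1 -> \sum_v mu v = 1 ->
  (forall k, k \in C -> mix lam (rcoord k) = mix mu (rcoord k)) ->
  mix lam g = mix mu g.

Variables (A : vec -> Prop) (C : {set K}).

Lemma determined_on g h : (forall v, A v -> g v = h v) -> determined A C g -> determined A C h.
Proof.
move=> gh detg lam mu lamA muA lam1 mu1 eqC.
by rewrite -(eq_mix_on lamA gh) -(eq_mix_on muA gh) (detg lam mu).
Qed.

Lemma determined_const c : determined A C (fun=> c).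
Proof. by move=> lam mu _ _ lam1 mu1 _; rewrite !mix_const lam1 mu1. Qed.

Lemma determined_rcoord k : k \in C -> determined A C (rcoord k).
Proof. by move=> kC lam mu _ _ _ _ /(_ k kC). Qed.

Lemma determinedB g h :
  determined A C g -> determined A C h -> determined A C (fun v => g v - h v).
Proof.
move=> detg deth lam mu lamA muA lam1 mu1 eqC.
by rewrite !mixB (detg lam mu) ?(deth lam mu).
Qed.

Lemma determined_sum (I : finType) (S : {pred I}) (G : I -> vec -> R) :
  (forall j, j \in S -> determined A C (G j)) ->
  determined A C (fun v => \sum_(j in S) G j v).
Proof.
move=> detG lam mu lamA muA lam1 mu1 eqC.
by rewrite !mix_sum; apply: eq_bigr => j jS; apply: detG.
Qed.

End Mixtures.

Arguments rcoord {R K}.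

Section Transversals.
Variables (n : nat) (V : {set {set 'I_n}}) (E : {set {set {set 'I_n}}}).
Variable ibar : {set 'I_n} -> 'I_n.
Hypothesis V_partition : partition V [set: 'I_n].
Hypothesis E_sub : forall e, e \in E -> (e \subset V) && (2 <= #|e|)%N.
Hypothesis E_down : forall (e e' : {set {set 'I_n}}),
  e \in E -> e' \subset e -> (1 < #|e'|)%N -> e' \in E.
Hypothesis ibar_in : forall I, I \in V -> ibar I \in I.

Local Notation D := [set ibar I | I in V].
Local Notation pb := (pblock V).
Implicit Types (I J : {set 'I_n}) (u v w : {ffun {set 'I_n} -> bool}).

Lemma pblock_in i : pb i \in V.
Proof. by case/and3P: V_partition => /eqP cov _ _; rewrite pblock_mem // cov inE. Qed.

Lemma mem_pblock_self i : i \in pb i.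
Proof. by case/and3P: V_partition => /eqP cov _ _; rewrite mem_pblock cov inE. Qed.

Lemma pblock_eq I i : I \in V -> i \in I -> pb i = I.
Proof. by case/and3P: V_partition => _ triv _; apply: def_pblock. Qed.

Lemma memD i : (i \in D) = (i == ibar (pb i)).
Proof.
apply/imsetP/eqP => [[I IV ->] | ->]; last by exists (pb i); rewrite ?pblock_in.
by rewrite (pblock_eq IV (ibar_in IV)).
Qed.

Lemma setD_ibar I : I \in V -> I :\: D = I :\ ibar I.
Proof.
move=> IV; apply/setP => x; rewrite !inE memD.
by case xI: (x \in I); rewrite ?andbF // (pblock_eq IV xI).
Qed.

Definition admissible (J : {set 'I_n}) :=
  (#|pb @: J| == #|J|) && ((#|J| <= 1)%N || (pb @: J \in E)).

Lemma Jfam_pblock (e : {set {set 'I_n}}) J :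
  e \subset V -> J \in Jfam e -> #|pb @: J| = #|J| /\ pb @: J = e.
Proof.
move=> eV; rewrite inE => /andP [Je /forall_inP J1].
have pbJ i : i \in J -> pb i \in e.
  by case/(subsetP Je)/bigcupP => I Ie iI; rewrite (pblock_eq (subsetP eV _ Ie) iI).
have inj : {in J &, injective pb}.
  move=> i j iJ jJ eq_ij; have /cards1P [x Jx] := J1 _ (pbJ _ iJ).
  have : i \in J :&: pb i by rewrite inE iJ mem_pblock_self.
  have : j \in J :&: pb i by rewrite inE jJ eq_ij mem_pblock_self.
  by rewrite Jx => /set1P -> /set1P ->.
split; first exact/eqP/imset_injP.
apply/setP => I; apply/imsetP/idP => [[i iJ ->] | Ie]; first exact: pbJ.
have /cards1P [x Jx] := J1 _ Ie.
have /setIP [xJ xI] : x \in J :&: I by rewrite Jx set11.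
by exists x; rewrite ?(pblock_eq (subsetP eV _ Ie) xI).
Qed.

Lemma Jfam_image (J : {set 'I_n}) : #|pb @: J| = #|J| -> J \in Jfam (pb @: J).
Proof.
move=> /eqP/imset_injP inj; rewrite inE; apply/andP; split.
  by apply/subsetP => i iJ; apply/bigcupP; exists (pb i); rewrite ?imset_f ?mem_pblock_self.
apply/forall_inP => _ /imsetP [k kJ ->]; apply/cards1P; exists k.
apply/setP => x; rewrite !inE; apply/andP/eqP => [[xJ xk] | ->].
  by apply: inj; rewrite ?(pblock_eq (pblock_in k) xk).
by rewrite kJ mem_pblock_self.
Qed.

Lemma mem_JH (J : {set 'I_n}) : (J \in JH V E) = admissible J && (J != set0).
Proof.
apply/bigcupP/andP => [[e] | [/andP [/eqP inj sizeJ] J0]].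
  rewrite inE => /orP [/imsetP [I IV ->] | eE].
    rewrite -sub1set in IV; case/(Jfam_pblock IV) => inj img.
    have J1 : #|J| = 1%N by rewrite -inj img cards1.
    by rewrite /admissible inj J1 eqxx -card_gt0 J1.
  case/andP: (E_sub eE) => eV e2; case/(Jfam_pblock eV) => inj img.
  by rewrite /admissible inj img eE eqxx orbT -card_gt0 -inj img (leq_trans _ e2).
exists (pb @: J); last exact: Jfam_image.
rewrite inE; case/orP: sizeJ => [J1 | ->]; last by rewrite orbT.
have /cards1P [i ->] : #|J| == 1%N by rewrite eqn_leq J1 card_gt0.
by rewrite imset_set1 imset_f ?pblock_in.
Qed.

Lemma single_JH i : [set i] \in JH V E.
Proof. by rewrite mem_JH /admissible imset_set1 !cards1 -card_gt0 cards1. Qed.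

Lemma single_JHle i : i \notin D -> [set i] \in JHle V E D.
Proof. by move=> iD; rewrite inE single_JH sub1set inE iD. Qed.

Lemma coord_prod (u : {ffun {set 'I_n} -> bool}) J : J \in JH V E ->
  ((1 < #|J|)%N -> u J = [forall i in J, u [set i]]) ->
  u J = [forall i in J, u [set i]].
Proof.
rewrite mem_JH => /andP [_ J0] prodJ; case: (ltnP 1 #|J|) => [/prodJ // | J1].
have /cards1P [i ->] : #|J| == 1%N by rewrite eqn_leq J1 card_gt0.
by apply/idP/forall_inP => [ui _ /set1P -> | /(_ i (set11 i))].
Qed.

Lemma admissible_setD1 J d : admissible J -> admissible (J :\ d).
Proof.
case/andP => /imset_injP inj sizeJ; have subJ := subsetDl J [set d].
have injD : {in J :\ d &, injective pb} by apply: sub_in2 inj => i /(subsetP subJ).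
rewrite /admissible (card_in_imset injD) eqxx /=.
case: leqP => //= J2; case/orP: sizeJ => [J1 | JE].
  by rewrite ltnNge (leq_trans (subset_leq_card subJ) J1) in J2.
by apply: E_down JE (imsetS pb subJ) _; rewrite (card_in_imset injD).
Qed.

Lemma admissible_swap J d j :
  admissible J -> d \in J -> pb j = pb d -> admissible (j |: J :\ d).
Proof.
move=> admJ dJ jd; have [-> | _] := eqVneq j d; first by rewrite setD1K.
have /andP [/imset_injP inj _] := admJ.
have jJ : j \notin J :\ d.
  by apply/setD1P => -[+ jJ]; rewrite (inj j d jJ dJ jd) eqxx.
have card_swap : #|j |: J :\ d| = #|J| by rewrite cardsU1 jJ (cardsD1 d J) dJ.
have img_swap : pb @: (j |: J :\ d) = pb @: J.
  by rewrite imsetU1 -[in RHS](setD1K dJ) imsetU1 jd.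
by rewrite /admissible card_swap img_swap.
Qed.

Variable R : realType.

Definition monomial (J : {set 'I_n}) (w : {ffun {set 'I_n} -> bool}) : R :=
  ([forall i in J, w [set i]] : nat)%:R.

Lemma monomialU1 a J w : monomial (a |: J) w = rcoord [set a] w * monomial J w.
Proof.
rewrite /monomial /rcoord -natrM mulnb; congr (nat_of_bool _)%:R.
apply/forall_inP/andP => [all_aJ | [wa /forall_inP all_J] i].
  split; first by apply: all_aJ; rewrite setU11.
  by apply/forall_inP => i iJ; apply: all_aJ; rewrite setU1r.
by case/setU1P => [-> | /all_J].
Qed.

Lemma SH_rcoordD w d : SH V E w -> d \in D ->
  rcoord [set d] w = 1 - \sum_(j in pb d :\: D) rcoord [set j] w :> R.
Proof.
case=> _ block_sum _; rewrite memD => /eqP dbar; have dV := pblock_in d.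
have := block_sum _ dV; rewrite (big_setD1 d) ?mem_pblock_self //= (setD_ibar dV) -dbar.
move=> /(congr1 (fun m => m%:R : R)); rewrite natrD natr_sum mulr1n => <-.
by rewrite addrK.
Qed.

Lemma SH_monomial_elim w J d : SH V E w -> d \in J -> d \in D ->
  monomial J w = monomial (J :\ d) w - \sum_(j in pb d :\: D) monomial (j |: J :\ d) w.
Proof.
move=> SHw dJ dD; rewrite -{1}(setD1K dJ) monomialU1 (SH_rcoordD SHw dD).
by rewrite mulrBl mul1r mulr_suml; congr (_ - _); apply: eq_bigr => j _; rewrite monomialU1.
Qed.

(* Induction on [#|J :&: D|]: [SH_monomial_elim] trades an element of [D] for
   elements outside [D], and downward closure keeps the new sets admissible. *)
Lemma monomial_determined J : admissible J -> determined (SH V E) (JHle V E D) (monomial J).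
Proof.
have [k] := ubnP #|J :&: D|; elim: k J => // k IH J JDk admJ.
have [JD0 | [d /setIP [dJ dD]]] := set_0Vmem (J :&: D).
  have [-> | J0] := eqVneq J set0.
    apply: determined_on (determined_const (1 : R)) => w _.
    rewrite /monomial (_ : [forall i in set0, _] = true) //.
    by apply/forall_inP => i; rewrite inE.
  have JJ : J \in JHle V E D.
    by rewrite inE mem_JH admJ J0 /= -disjoints_subset -setI_eq0 JD0.
  apply: determined_on (determined_rcoord JJ) => w [_ _ prodw].
  have /setIdP [JJH _] := JJ.
  by rewrite /rcoord /monomial (coord_prod JJH (prodw J JJH)).
have ltD : (#|(J :\ d) :&: D| < k)%N.
  rewrite -ltnS; apply: leq_trans JDk; rewrite ltnS; apply: proper_card.
  by apply/properP; split; [exact/setSI/subsetDl | exists d; rewrite !inE ?eqxx ?dJ].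
apply: (@determined_on _ _ _ _ (fun w => monomial (J :\ d) w -
                          \sum_(j in pb d :\: D) monomial (j |: J :\ d) w)).
  by move=> w SHw; rewrite (SH_monomial_elim SHw dJ dD).
apply: determinedB; first exact: IH (admissible_setD1 _ admJ).
apply: determined_sum => j /setDP [jd jD].
apply: IH; last exact: admissible_swap admJ dJ (pblock_eq (pblock_in d) jd).
suff -> : (j |: J :\ d) :&: D = (J :\ d) :&: D by [].
apply/setP => x; rewrite !inE; case: (eqVneq x j) => [-> | _] //=.
by rewrite (negbTE jD) !andbF.
Qed.

Definition restrictD w : {ffun {set 'I_n} -> bool} :=
  [ffun J => (J \in JHle V E D) && w J].

Lemma SH_restrictD w : SH V E w -> SHle V E D (restrictD w).
Proof.
case=> _ block_sum prodw; split.
- by move=> J /negbTE JC; rewrite ffunE JC.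
- move=> I IV; rewrite -(block_sum I IV) [leqRHS](@big_setID _ _ _ _ I D) /=.
  apply: leq_trans (leq_addl _ _); apply: leq_sum => i _.
  by rewrite ffunE; case: (_ \in _); case: (w _).
- move=> J JC J2; have /setIdP [JJ /subsetP JD] := JC.
  rewrite ffunE JC prodw //; apply: eq_forallb_in => i iJ.
  by rewrite ffunE single_JHle // -in_setC JD.
Qed.

Definition selD v i : bool :=
  if i \in D then [forall j in pb i :\: D, ~~ v [set j]] else v [set i].

Definition liftD v : {ffun {set 'I_n} -> bool} :=
  [ffun J => (J \in JH V E) && [forall i in J, selD v i]].

Lemma liftD_single v i : liftD v [set i] = selD v i.
Proof.
rewrite ffunE single_JH /=.
by apply/forall_inP/idP => [/(_ i (set11 i)) | si _ /set1P ->].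
Qed.

Lemma SHle_liftD v : SHle V E D v -> SH V E (liftD v).
Proof.
case=> _ block_le _; split.
- by move=> J /negbTE JJ; rewrite ffunE JJ.
- move=> I IV; under eq_bigr do rewrite liftD_single.
  have ID : ibar I \in D by apply: imset_f.
  rewrite (big_setD1 (ibar I)) ?ibar_in // -(setD_ibar IV).
  under eq_bigr => i /setDP [_ iD] do rewrite /selD (negbTE iD).
  rewrite /selD ID (pblock_eq IV (ibar_in IV)).
  have -> : [forall j in I :\: D, ~~ v [set j]] = (\sum_(j in I :\: D) v [set j] == 0)%N.
    by rewrite sum_nat_eq0; apply: eq_forallb_in => j _; case: (v _).
  by move: (block_le I IV); case: (\sum_(j in _) _)%N => [|[]].
- move=> J JJ _; rewrite ffunE JJ; apply: eq_forallb_in => i _.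
  by rewrite liftD_single.
Qed.

Lemma liftD_JHle v J : SHle V E D v -> J \in JHle V E D -> liftD v J = v J.
Proof.
case=> _ _ prodv JC; have /setIdP [JJ /subsetP JD] := JC.
rewrite ffunE JJ (coord_prod JJ (prodv J JC)); apply: eq_forallb_in => i iJ.
have iD : i \notin D by rewrite -in_setC JD.
by rewrite /selD (negbTE iD).
Qed.

Implicit Types x y : {ffun {set 'I_n} -> R}.

Lemma MC_projle x : MC V E x -> MCle V E D (projle V E D x).
Proof.
case=> lam [lam_ge0 lamS lam1 x_mix].
have -> : projle V E D x = [ffun J => mix lam (fun w => rcoord J (restrictD w))].
  apply/ffunP => J; rewrite !ffunE x_mix /mix.
  case: ifP => JC; apply/esym; last by apply: big1 => w _; rewrite /rcoord ffunE JC mulr0.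
  by apply: eq_bigr => w _; rewrite /rcoord ffunE JC.
exact: conv01_push lam_ge0 lamS lam1 SH_restrictD.
Qed.

Lemma projle_MC_inj x y : MC V E x -> MC V E y ->
  projle V E D x = projle V E D y -> x = y.
Proof.
case=> lam [_ lamS lam1 x_mix] [mu [_ muS mu1 y_mix]] /ffunP eq_proj.
have eqC J : J \in JHle V E D -> mix lam (rcoord J) = mix mu (rcoord J).
  by move=> JC; have := eq_proj J; rewrite !ffunE JC x_mix y_mix.
apply/ffunP => J; rewrite x_mix y_mix -/(mix lam (rcoord J)) -/(mix mu (rcoord J)).
have [JJ | JJ] := boolP (J \in JH V E).
  have coordJ w : SH V E w -> rcoord J w = monomial J w.
    by case=> _ _ prodw; rewrite /rcoord /monomial (coord_prod JJ (prodw J JJ)).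
  rewrite (eq_mix_on lamS coordJ) (eq_mix_on muS coordJ).
  have /andP [admJ _] : admissible J && (J != set0) by rewrite -mem_JH.
  exact: monomial_determined admJ lam mu lamS muS lam1 mu1 eqC.
have coordJ w : SH V E w -> rcoord J w = 0 :> R by case=> wJ _ _; rewrite /rcoord wJ.
by rewrite (eq_mix_on lamS coordJ) (eq_mix_on muS coordJ) !mix_const !mul0r.
Qed.

Lemma projle_MC_surj y : MCle V E D y -> exists2 x, MC V E x & projle V E D x = y.
Proof.
case=> lam [lam_ge0 lamS lam1 y_mix].
exists [ffun J => mix lam (fun v => rcoord J (liftD v))].
  exact: conv01_push lam_ge0 lamS lam1 SHle_liftD.
apply/ffunP => J; rewrite !ffunE y_mix -/(mix lam (rcoord J)); case: ifP => JC.
  by apply: eq_mix_on lamS _ => v SHlev; rewrite /rcoord liftD_JHle.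
have coordJ v : SHle V E D v -> rcoord J v = 0 :> R by case=> vJ _ _; rewrite /rcoord vJ ?JC.
by rewrite (eq_mix_on lamS coordJ) mix_const mul0r.
Qed.

End Transversals.

Theorem proposition3p4 (R : realType) (n : nat)
  (V : {set {set 'I_n}}) (E : {set {set {set 'I_n}}})
  (ibar : {set 'I_n} -> 'I_n) :
  (0 < n)%N ->
  partition V [set: 'I_n] ->
  (forall I, I \in V -> (2 <= #|I|)%N) ->
  (forall e, e \in E -> (e \subset V) && (2 <= #|e|)%N) ->
  (forall (e e' : {set {set 'I_n}}), e \in E -> e' \subset e -> (1 < #|e'|)%N -> e' \in E) ->
  (forall I, I \in V -> ibar I \in I) ->
  let D := [set ibar I | I in V] in
  [/\ (forall x : {ffun {set 'I_n} -> R}, MC V E x -> MCle V E D (projle V E D x)),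
      (forall x y : {ffun {set 'I_n} -> R}, MC V E x -> MC V E y ->
         projle V E D x = projle V E D y -> x = y) &
      (forall y : {ffun {set 'I_n} -> R}, MCle V E D y -> exists2 x, MC V E x & projle V E D x = y)].
Proof.
move=> _ V_partition _ E_sub E_down ibar_in D; split.
- exact: MC_projle.
- exact: projle_MC_inj.
- exact: projle_MC_surj.
Qed.
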